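(* Assume hypotheses (H1) and (H2) below with constants $0<\delta<1$, $\gamma>0$. Fix a positive integer $r$ and a prime $p$. If $X>p^{\frac{1+\gamma}{1-\delta}}$, then $$\frac{1}{|L(X)^{r_2}|}\sum_{K\in L(X)^{r_2}}a_\rho(p)^r=\frac{n_r}{1+f(p)}+O(p^{-1}),$$ where $n_r$ is the multiplicity of the trivial representation in $\rho^{\otimes r}$, and the implied constant depends only on $r$, $d$ and the constants in (H1), (H2).
   Context: $d\ge2$, $G=S_{d+1}$, $\rho$ the $d$-dimensional standard representation of $S_{d+1}$, fixed signature $(r_1,r_2)$. An $S_{d+1}$-field is a degree $d+1$ number field whose Galois closure has Galois group $S_{d+1}$; $L(s,\rho,K)=\zeta_K(s)/\zeta(s)=\sum a_\rho(n)n^{-s}$ (so $-1\le a_\rho(p)\le d$, and $a_\rho(p)=\chi_\rho(\mathrm{Frob}_p)$ for unramified $p$). $L(X)^{r_2}$ is the set of $S_{d+1}$-fields of signature $(r_1,r_2)$ with $|d_K|<X$, up to isomorphism. Local conditions: $\mathcal S_{p,C}$ ($p$ unramified, $\mathrm{Frob}_p\in C$) with weight $\frac{|C|}{|G|(1+f(p))}$; $\mathcal S_{p,r_i}$ ($p$ ramified of splitting type $r_i$, $i=1,\dots,w$) with weight $\frac{c_i(p)}{1+f(p)}$, where $f(p)=O(1/p)$ positive, $c_i(p)>0$, $\sum_ic_i(p)=f(p)$. For a finite set $\mathcal S$ of local conditions at distinct primes, $|\mathcal S|$ is the product of weights, and $L(X;\mathcal S)^{r_2}$ the subset of $L(X)^{r_2}$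 satisfying them. (H1) $|L(X)^{r_2}|=A(r_2)X+O(X^\delta)$; (H2) $|L(X;\mathcal S)^{r_2}|=|\mathcal S|A(r_2)X+O((\prod_{p\in\mathcal S}p)^\gamma X^\delta)$, uniformly in the primes and local conditions. *)

From mathcomp Require Import all_boot fingroup perm.
From Stdlib Require Import Reals.
Set Implicit Arguments. Unset Strict Implicit. Unset Printing Implicit Defensive.

Notation SymG d := {perm 'I_d.+1}.

(* Character of the d-dimensional standard representation rho of S_{d+1}:
   chi_rho(g) = #(fixed points of g) - 1. *)
Definition chi_std (d : nat) (g : SymG d) : Z :=
  (Z.of_nat #|[set i | g i == i]| - 1)%Z.

(* n_r = multiplicity of the trivial representation in rho^{(x) r}
       = <chi_rho^r, 1>_G = (1/|G|) sum_{g in G} chi_rho(g)^r. *)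
Definition n_mult (d r : nat) : R :=
  (\big[Rplus/0%R]_(g : SymG d) IZR (chi_std g ^ Z.of_nat r)%Z
     / INR #|SymG d|)%R.

(* Local conditions at a prime p:
   LUnr C : p unramified and Frob_p in the conjugacy class C,
   LRam i : p ramified of splitting type r_i (i : 'I_w). *)
Inductive lcond (d w : nat) : Type :=
| LUnr of {set SymG d}
| LRam of 'I_w.

Definition fsum (w : nat) (c : 'I_w -> nat -> R) (p : nat) : R :=
  \big[Rplus/0%R]_(i < w) c i p.

Definition lweight (d w : nat) (c : 'I_w -> nat -> R) (p : nat)
    (l : lcond d w) : R :=
  match l with
  | LUnr C => (INR #|C| / (INR #|SymG d| * (1 + fsum c p)))%R
  | LRam i => (c i p / (1 + fsum c p))%R
  end.

(* |S| = product of the weights of a finite set S of local conditions,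
   represented as a list of (prime, condition) pairs. *)
Definition setweight (d w : nat) (c : 'I_w -> nat -> R)
    (S : seq (nat * lcond d w)) : R :=
  \big[Rmult/1%R]_(s <- S) lweight c s.1 s.2.

(* A field K satisfies the local condition l at p, given the local data
   ram K p (None = unramified, Some i = ramified of splitting type r_i)
   and frob K p (a representative of Frob_p when p is unramified). *)
Definition sat_cond (d w : nat) (F : Type)
    (ram : F -> nat -> option 'I_w) (frob : F -> nat -> SymG d)
    (K : F) (p : nat) (l : lcond d w) : bool :=
  match l with
  | LUnr C => (ram K p == None) && (frob K p \in C)
  | LRam i => ram K p == Some i
  end.

Definition sat_all (d w : nat) (F : Type)
    (ram : F -> nat -> option 'I_w) (frob : F -> nat -> SymG d)
    (S : seq (nat * lcond d w)) (K : F) : bool :=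
  all (fun s => sat_cond ram frob K s.1 s.2) S.

Definition Rsum (l : seq R) : R := foldr Rplus 0%R l.

(* Sort the fields according to the behaviour of p.  For unramified p,
   a_rho(p)^r = chi_rho(Frob_p)^r is a class function of Frob_p, and (H2) for
   the single local condition "Frob_p in C" counts the fields of each class C
   as |C| / (|G| (1 + f(p))) A X up to O(p^gamma X^delta); summing chi_rho^r
   against these weights gives n_r / (1 + f(p)) times A X.  The remaining
   (ramified) fields number f(p) / (1 + f(p)) A X up to the same errors and
   contribute at most d^r each.  Dividing by |L(X)| = A X + O(X^delta) finishes
   the proof, because X > p^((1 + gamma) / (1 - delta)) makes
   p^gamma X^delta <= X / p, so every error term is O(1/p). *)

Set Warnings "-notation-overridden".
From HB Require Import structures.
From Stdlib Require Import Lra Lia.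
From mathcomp Require Import all_boot fingroup perm.
From Stdlib Require Import Reals.
Set Implicit Arguments. Unset Strict Implicit.

Open Scope R_scope.

HB.instance Definition _ := Monoid.isComLaw.Build R 0 Rplus
  (fun a b c => esym (Rplus_assoc a b c)) Rplus_comm Rplus_0_l.
HB.instance Definition _ := Monoid.isComLaw.Build R 1 Rmult
  (fun a b c => esym (Rmult_assoc a b c)) Rmult_comm Rmult_1_l.
HB.instance Definition _ := Monoid.isMulLaw.Build R 0 Rmult Rmult_0_l Rmult_0_r.
HB.instance Definition _ :=
  Monoid.isAddLaw.Build R Rmult Rplus Rmult_plus_distr_r Rmult_plus_distr_l.

Lemma iter_Rplus (n : nat) (x : R) : iter n (Rplus x) 0 = INR n * x.
Proof.
elim: n => [|n IHn]; first by rewrite /= Rmult_0_l.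
by rewrite [iter _ _ _]/= IHn S_INR; ring.
Qed.

Lemma INR_sum (I : Type) (s : seq I) (P : pred I) (F : I -> nat) :
  INR (\sum_(i <- s | P i) F i) = \big[Rplus/0]_(i <- s | P i) INR (F i).
Proof. exact: (big_morph INR plus_INR). Qed.

Lemma INR_count (T : Type) (P : pred T) (s : seq T) :
  INR (count P s) = \big[Rplus/0]_(x <- s) INR (P x).
Proof. by rewrite -sum1_count big_mkcond INR_sum; apply: eq_bigr => x _; case: (P x). Qed.

Lemma INR_card (T : finType) (A : {pred T}) :
  INR #|A| = \big[Rplus/0]_(x : T) INR (x \in A).
Proof. by rewrite -sum1_card big_mkcond INR_sum; apply: eq_bigr => x _; case: (x \in A). Qed.

Lemma Rabs_big_le (I : Type) (s : seq I) (P : pred I) (x y : I -> R) :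
  (forall i, P i -> Rabs (x i) <= y i) ->
  Rabs (\big[Rplus/0]_(i <- s | P i) x i) <= \big[Rplus/0]_(i <- s | P i) y i.
Proof.
move=> hxy; elim/big_rec2: _ => [|i a b Pi hab]; first by rewrite Rabs_R0; lra.
by apply: Rle_trans (Rabs_triang _ _) _; have := hxy i Pi; lra.
Qed.

Lemma sum_const_R (T : finType) (x : R) : \big[Rplus/0]_(i : T) x = INR #|T| * x.
Proof.
rewrite (eq_bigl (fun i => i \in [set: T])); last by move=> i; rewrite inE.
by rewrite big_const iter_Rplus cardsT.
Qed.

Lemma Rabs_sum_le_const (I : Type) (s : seq I) (x : I -> R) (D : R) :
  (forall i, Rabs (x i) <= D) -> Rabs (\big[Rplus/0]_(i <- s) x i) <= INR (size s) * D.
Proof.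
move=> x_bound; apply: Rle_trans.
  by apply: (@Rabs_big_le _ _ _ _ (fun _ => D)) => i _.
by rewrite big_const_seq iter_Rplus count_predT; apply: Rle_refl.
Qed.

Lemma Rsum_map (T : Type) (x : T -> R) (s : seq T) :
  Rsum (map x s) = \big[Rplus/0]_(i <- s) x i.
Proof. by elim: s => [|i s IHs]; rewrite ?big_nil ?big_cons //= IHs. Qed.

Lemma Rmult_le_Rabs_compat (c y z : R) : 0 <= y -> y <= z -> c * y <= Rabs c * z.
Proof.
move=> y_ge0 y_le_z; apply: Rle_trans (_ : Rabs c * y <= _).
  exact: Rmult_le_compat_r (Rle_abs c).
exact: Rmult_le_compat_l (Rabs_pos c) y_le_z.
Qed.

Lemma Rinv_1plus_le1 (f : R) : 0 <= f -> / (1 + f) <= 1.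
Proof. by move=> f_ge0; rewrite -Rinv_1; apply: Rinv_le_contravar; lra. Qed.

Section ClassFunctions.

Variables (gT : finGroupType) (phi : gT -> R).
Hypothesis phiJ : forall x y, phi (x ^ y)%g = phi x.

Lemma class_decomp (g : gT) :
  phi g = \big[Rplus/0]_(C in classes [set: gT]) (phi (repr C) * INR (g \in C)).
Proof.
rewrite (bigD1 (g ^: [set: gT])%g) ?mem_classes ?inE //= big1 ?Rplus_0_r.
  have /imsetP[z _ ->] : repr (g ^: [set: gT])%g \in (g ^: [set: gT])%g.
    exact/mem_repr/class_refl.
  by rewrite phiJ class_refl Rmult_1_r.
move=> _ /andP[/imsetP[x _ ->] neq_xg].
case: (boolP (g \in _)) => [/class_eqP eq_xg|_]; last exact: Rmult_0_r.
by rewrite eq_xg eqxx in neq_xg.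
Qed.

Lemma class_sum :
  \big[Rplus/0]_(g : gT) phi g =
  \big[Rplus/0]_(C in classes [set: gT]) (phi (repr C) * INR #|C|).
Proof.
rewrite (eq_bigr _ (fun g _ => class_decomp g)) exchange_big /=.
apply: eq_bigr => C _; by rewrite -big_distrr /= INR_card.
Qed.

End ClassFunctions.

Lemma chi_stdJ d (x y : SymG d) : chi_std (x ^ y)%g = chi_std x.
Proof.
rewrite /chi_std; congr (Z.of_nat _ - 1)%Z.
have -> : [set i | (x ^ y)%g i == i] = (y^-1)%g @^-1: [set j | x j == j].
  apply/setP => i; rewrite !inE conjgE !permM.
  by apply/eqP/eqP => [fix_i | ->]; [apply: (@perm_inj _ y); rewrite fix_i |]; rewrite permKV.
exact/card_preimset/perm_inj.
Qed.

Lemma chi_std_bound d (g : SymG d) : (-1 <= chi_std g <= Z.of_nat d)%Z.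
Proof.
have : (#|[set i | g i == i]| <= #|'I_d.+1|)%nat by apply: max_card.
by rewrite card_ord /chi_std => /leP; lia.
Qed.

Lemma Rabs_IZR_pow_le (z : Z) (d n : nat) : (0 < d)%nat ->
  (-1 <= z <= Z.of_nat d)%Z -> Rabs (IZR (z ^ Z.of_nat n)) <= IZR (Z.of_nat d ^ Z.of_nat n).
Proof.
move=> /leP d_gt0 z_bound; rewrite -abs_IZR; apply: IZR_le.
by rewrite Z.abs_pow; apply: Z.pow_le_mono_l; lia.
Qed.

Lemma fsum_ge0 w (c : 'I_w -> nat -> R) p : (forall i, 0 < c i p) -> 0 <= fsum c p.
Proof.
move=> c_pos; rewrite /fsum; elim/big_rec: _ => [|i y _ y_ge0]; first exact: Rle_refl.
by have := c_pos i; lra.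
Qed.

Section FrobeniusClasses.

Variables (gT : finGroupType) (F : Type) (unram : pred F) (frob : F -> gT).

Definition frob_class_count (l : seq F) (C : {set gT}) : R :=
  INR (count (fun K => unram K && (frob K \in C)) l).

Lemma sum_frob_classes (l : seq F) (psi : gT -> R) (h : F -> R) :
  (forall x y, psi (x ^ y)%g = psi x) ->
  (forall K, unram K -> h K = psi (frob K)) ->
  \big[Rplus/0]_(K <- l) h K =
    \big[Rplus/0]_(C in classes [set: gT]) (psi (repr C) * frob_class_count l C)
    + \big[Rplus/0]_(K <- l) (INR (~~ unram K) * h K).
Proof.
move=> psiJ h_unram.
rewrite (eq_bigr (fun K => \big[Rplus/0]_(C in classes [set: gT])
    (psi (repr C) * INR (unram K && (frob K \in C))) + INR (~~ unram K) * h K)).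
  rewrite big_split /= exchange_big /=; congr (_ + _).
  by apply: eq_bigr => C _; rewrite -big_distrr /frob_class_count INR_count.
move=> K _; case: (boolP (unram K)) => [uK|_] /=.
  by rewrite Rmult_0_l Rplus_0_r h_unram // (class_decomp psiJ (frob K)).
by rewrite big1 ?Rplus_0_l ?Rmult_1_l // => C _; exact: Rmult_0_r.
Qed.

Variables (l : seq F) (A X eps f : R).
Hypothesis f_ge0 : 0 <= f.
Hypothesis AX_ge0 : 0 <= A * X.

Let G_gt0 : 0 < INR #|gT|.
Proof. by apply/lt_0_INR/ltP/card_gt0P; exists 1%g. Qed.

Let w (C : {set gT}) : R := INR #|C| / (INR #|gT| * (1 + f)).

Hypothesis count_approx : forall C, C \in classes [set: gT] ->
  Rabs (frob_class_count l C - w C * A * X) <= eps.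

Lemma sum_class_weights : \big[Rplus/0]_(C in classes [set: gT]) w C = / (1 + f).
Proof.
have := class_sum (phi := fun _ : gT => 1) (fun _ _ => erefl).
rewrite sum_const_R Rmult_1_r => sum_card.
rewrite /w /Rdiv -big_distrl /= (eq_bigr _ (fun C _ => esym (Rmult_1_l _))) -sum_card.
by move: G_gt0; set G := INR _ => ?; field; split; lra.
Qed.

Lemma sum_frob_class_counts (psi : gT -> R) :
  \big[Rplus/0]_(C in classes [set: gT]) (psi (repr C) * frob_class_count l C) =
    \big[Rplus/0]_(C in classes [set: gT]) (psi (repr C) * (frob_class_count l C - w C * A * X))
    + A * X * \big[Rplus/0]_(C in classes [set: gT]) (psi (repr C) * w C).
Proof.
rewrite big_distrr -big_split /=.
by apply: eq_bigr => C _; set y := w C; ring.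
Qed.

Lemma Rabs_class_errors_le (psi : gT -> R) (E : R) : (forall g, Rabs (psi g) <= E) ->
  Rabs (\big[Rplus/0]_(C in classes [set: gT])
          (psi (repr C) * (frob_class_count l C - w C * A * X)))
  <= INR #|classes [set: gT]| * E * eps.
Proof.
move=> psi_bound; rewrite Rmult_assoc -iter_Rplus -big_const.
apply: Rabs_big_le => C C_class; rewrite Rabs_mult.
by apply: Rmult_le_compat; try apply: Rabs_pos; [apply: psi_bound | apply: count_approx].
Qed.

Lemma ramified_count_le :
  \big[Rplus/0]_(K <- l) INR (~~ unram K)
  <= Rabs (INR (size l) - A * X) + INR #|classes [set: gT]| * eps + A * X * f.
Proof.
have := sum_frob_classes l (psi := fun _ => 1) (h := fun _ => 1)
  (fun _ _ => erefl) (fun _ _ => erefl).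
rewrite big_const_seq iter_Rplus count_predT Rmult_1_r (sum_frob_class_counts (fun _ => 1)).
rewrite (eq_bigr _ (fun C _ => Rmult_1_l (w C))) sum_class_weights.
rewrite (eq_bigr _ (fun K _ => Rmult_1_r (INR (~~ unram K)))).
set S1 := \big[Rplus/0]_(C in classes [set: gT]) _ => count_split.
have S1_bound : Rabs S1 <= INR #|classes [set: gT]| * 1 * eps.
  exact: Rabs_class_errors_le (fun _ => Req_le _ _ Rabs_R1).
have ramified_mass : A * X * (1 - / (1 + f)) <= A * X * f.
  apply: Rmult_le_compat_l => //.
  have -> : 1 - / (1 + f) = f * / (1 + f) by field; lra.
  by rewrite -[X in _ <= X]Rmult_1_r; apply: Rmult_le_compat_l => //; apply: Rinv_1plus_le1.
have := Rle_abs (INR (size l) - A * X); have := Rle_abs (- S1); rewrite Rabs_Ropp.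
lra.
Qed.

Variables (D : R) (phi : gT -> R) (h : F -> R).
Hypothesis phiJ : forall x y, phi (x ^ y)%g = phi x.
Hypothesis phi_bound : forall g, Rabs (phi g) <= D.
Hypothesis h_bound : forall K, Rabs (h K) <= D.
Hypothesis h_unram : forall K, unram K -> h K = phi (frob K).

Lemma Rabs_class_average_le :
  Rabs (\big[Rplus/0]_(g : gT) phi g / INR #|gT| / (1 + f)) <= D.
Proof.
have sum_bound : Rabs (\big[Rplus/0]_(g : gT) phi g) <= INR #|gT| * D.
  by rewrite -sum_const_R; apply: Rabs_big_le => g _.
rewrite /Rdiv !Rabs_mult !Rabs_inv (Rabs_pos_eq (INR _)) ?(Rabs_pos_eq (1 + f)); try lra.
apply: Rle_trans (_ : Rabs (\big[Rplus/0]_(g : gT) phi g) * / INR #|gT| <= _).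
  rewrite -[X in _ <= X]Rmult_1_r; apply: Rmult_le_compat_l; last exact: Rinv_1plus_le1.
  by apply: Rmult_le_pos; [apply: Rabs_pos | left; apply: Rinv_0_lt_compat].
by apply: (Rmult_le_reg_r (INR #|gT|)) => //; rewrite Rmult_assoc Rinv_l; lra.
Qed.

Lemma frob_average_deviation :
  Rabs (\big[Rplus/0]_(K <- l) h K
        - INR (size l) * (\big[Rplus/0]_(g : gT) phi g / INR #|gT| / (1 + f)))
  <= D * (2 * INR #|classes [set: gT]| * eps + 2 * Rabs (INR (size l) - A * X)
          + A * X * f).
Proof.
set N := INR (size l); set n' := \big[Rplus/0]_(g : gT) phi g / INR #|gT| / (1 + f).
have D_ge0 : 0 <= D by apply: Rle_trans (phi_bound 1%g); apply: Rabs_pos.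
have n'_classes : n' = \big[Rplus/0]_(C in classes [set: gT]) (phi (repr C) * w C).
  rewrite /n' (class_sum phiJ) /Rdiv !big_distrl /=.
  apply: eq_bigr => C _; rewrite /w /Rdiv Rinv_mult.
  by set y := INR #|C|; set z := INR #|gT|; ring.
have := sum_frob_classes l phiJ h_unram; rewrite sum_frob_class_counts -n'_classes.
set SE := \big[Rplus/0]_(C in classes [set: gT]) _.
set Ram := \big[Rplus/0]_(K <- l) (INR (~~ unram K) * h K) => sum_split.
have Ram_bound : Rabs Ram <= D * \big[Rplus/0]_(K <- l) INR (~~ unram K).
  rewrite big_distrr /=; apply: Rabs_big_le => K _.
  case: (unram K); rewrite /= ?Rmult_0_l ?Rmult_0_r ?Rabs_R0 ?Rmult_1_l ?Rmult_1_r //.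
  exact: Rle_refl.
have main_bound : Rabs ((A * X - N) * n') <= Rabs (N - A * X) * D.
  rewrite Rabs_mult Rabs_minus_sym; apply: Rmult_le_compat_l; first exact: Rabs_pos.
  exact: Rabs_class_average_le.
have SE_bound : Rabs SE <= INR #|classes [set: gT]| * D * eps.
  exact: Rabs_class_errors_le phi_bound.
have := Rmult_le_compat_l _ _ _ D_ge0 ramified_count_le; rewrite -/N.
rewrite sum_split.
have -> : SE + A * X * n' + Ram - N * n' = SE + (A * X - N) * n' + Ram by ring.
have := Rabs_triang (SE + (A * X - N) * n') Ram.
have := Rabs_triang SE ((A * X - N) * n').
lra.
Qed.

End FrobeniusClasses.

Lemma frob_class_count_sat d w (F : Type) (ram : F -> nat -> option 'I_w)
    (frob : F -> nat -> SymG d) p C (l : seq F) :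
  frob_class_count (fun K => ram K p == None) (fun K => frob K p) l C
  = INR (size (filter (sat_all ram frob [:: (p, LUnr w C)]) l)).
Proof. by rewrite size_filter; congr INR; apply: eq_count => K; rewrite /sat_all /= andbT. Qed.

Lemma Rpower_threshold (P X gamma delta : R) :
  1 < P -> 0 < gamma -> 0 < delta < 1 ->
  Rpower P ((1 + gamma) / (1 - delta)) < X ->
  [/\ 1 < X, Rpower P gamma * Rpower X delta <= X / P & Rpower X delta <= X / P].
Proof.
move=> P_gt1 gamma_gt0 delta_bound X_gt.
have expo_gt0 : 0 < (1 + gamma) / (1 - delta) by apply: Rdiv_lt_0_compat; lra.
have X_gt1 : 1 < X.
  by have := Rpower_lt _ _ _ P_gt1 expo_gt0; rewrite Rpower_O; lra.
have PX : Rpower P (1 + gamma) < Rpower X (1 - delta).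
  have -> : 1 + gamma = (1 + gamma) / (1 - delta) * (1 - delta) by field; lra.
  rewrite -Rpower_mult; apply: Rlt_Rpower_l; first lra.
  by split; [apply: exp_pos | lra].
have X_split : X = Rpower X (1 - delta) * Rpower X delta.
  by rewrite -Rpower_plus (_ : 1 - delta + delta = 1) ?Rpower_1 //; [lra | ring].
have Xd_gt0 : 0 < Rpower X delta by apply: exp_pos.
have Pg_gt1 : 1 < Rpower P gamma by rewrite -(Rpower_O P); [apply: Rpower_lt | ]; lra.
have scale : Rpower P gamma * Rpower X delta <= X / P.
  have -> : Rpower P gamma = Rpower P (1 + gamma) / P.
    by rewrite Rpower_plus Rpower_1; [field | ]; lra.
  rewrite {2}X_split /Rdiv Rmult_assoc (Rmult_comm (/ P)) -Rmult_assoc.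
  by apply: Rmult_le_compat_r; [left; apply: Rinv_0_lt_compat; lra | nra].
by split => //; nra.
Qed.

(* No sign condition on N: for N <= 0 the hypothesis forces T = 0, and T / 0 = 0. *)
Lemma Rabs_div_le (T N D : R) : 0 <= D -> Rabs T <= D * N -> Rabs (T / N) <= D.
Proof.
move=> D_ge0 T_bound; have [N_gt0 | N_le0] := Rlt_le_dec 0 N.
  rewrite /Rdiv Rabs_mult Rabs_inv (Rabs_pos_eq N); last lra.
  by apply: (Rmult_le_reg_r N) => //; rewrite Rmult_assoc Rinv_l; lra.
have -> : T = 0.
  case: (Req_dec T 0) => // /Rabs_no_R0 T_neq0; exfalso; apply: T_neq0.
  apply: Rle_antisym; last exact: Rabs_pos.
  by have := Rmult_le_compat_l D N 0 D_ge0 N_le0; lra.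
by rewrite /Rdiv Rmult_0_l Rabs_R0.
Qed.

Lemma ratio_deviation (T N n' A X P B M D : R) :
  0 < A -> 0 < X -> 0 < P ->
  Rabs (N - A * X) <= B * (X / P) -> Rabs (T - N * n') <= M * (X / P) ->
  Rabs T <= D * N -> Rabs n' <= D ->
  Rabs (T / N - n') <= (2 * M + 4 * D * B) / A / P.
Proof.
move=> A_gt0 X_gt0 P_gt0 N_approx num_bound T_bound n'_bound.
have D_ge0 : 0 <= D by apply: Rle_trans n'_bound; apply: Rabs_pos.
have XP_gt0 : 0 < X / P by apply: Rdiv_lt_0_compat.
have B_ge0 : 0 <= B by have := Rabs_pos (N - A * X); nra.
have M_ge0 : 0 <= M by have := Rabs_pos (T - N * n'); nra.
have AP_gt0 : 0 < A * P by apply: Rmult_lt_0_compat.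
(* Either N >= A X / 2, or the bound on N - A X forces A P <= 2 B and the
   trivial bound 2 D suffices. *)
have [N_large | N_small] := Rle_lt_dec (A * X / 2) N.
- have N_gt0 : 0 < N by nra.
  apply: (Rmult_le_reg_r (A * X / 2)); first nra.
  have -> : (2 * M + 4 * D * B) / A / P * (A * X / 2) = (M + 2 * D * B) * (X / P).
    by field; lra.
  have : Rabs (T / N - n') * N = Rabs (T - N * n').
    rewrite -{2}(Rabs_pos_eq N) -?Rabs_mult; last lra.
    by apply: f_equal; field; lra.
  have : Rabs (T / N - n') * (A * X / 2) <= Rabs (T / N - n') * N.
    by apply: Rmult_le_compat_l; [apply: Rabs_pos | lra].
  have : 0 <= D * B * (X / P) by apply: Rmult_le_pos; [apply: Rmult_le_pos | lra].
  lra.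
- have ratio_bound := Rabs_div_le D_ge0 T_bound.
  have P_small : A * P <= 2 * B.
    have : A * X / 2 < B * (X / P) by have := Rle_abs (A * X - N); rewrite Rabs_minus_sym; lra.
    have -> : A * X / 2 = A * P / 2 * (X / P) by field; lra.
    by move/(Rmult_lt_reg_r _ _ _ XP_gt0); lra.
  apply: Rle_trans (_ : 2 * D <= _).
    by rewrite /Rminus; apply: Rle_trans (Rabs_triang _ _) _; rewrite Rabs_Ropp; lra.
  apply: (Rmult_le_reg_r (A * P)) => //.
  have -> : (2 * M + 4 * D * B) / A / P * (A * P) = 2 * M + 4 * D * B by field; lra.
  nra.
Qed.

Section ArtinCoefficientMoments.

Variables (d r : nat) (delta gamma A C1 C2 Cf : R).
Hypotheses (hd : (2 <= d)%nat) (hdelta : 0 < delta < 1) (hgamma : 0 < gamma) (hA : 0 < A).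
Variables (w : nat) (c : 'I_w -> nat -> R) (F : eqType) (L : R -> seq F).
Variables (ram : F -> nat -> option 'I_w) (frob : F -> nat -> SymG d) (a : F -> nat -> Z).
Hypothesis c_pos : forall i p, prime p -> 0 < c i p.
Hypothesis f_bound : forall p, prime p -> fsum c p <= Cf / INR p.
Hypothesis a_bound : forall K p, (-1 <= a K p <= Z.of_nat d)%Z.
Hypothesis a_unram : forall K p, prime p -> ram K p = None -> a K p = chi_std (frob K p).
Hypothesis H1 : forall X, 1 <= X -> Rabs (INR (size (L X)) - A * X) <= C1 * Rpower X delta.
Hypothesis H2 : forall X (S : seq (nat * lcond d w)), 1 <= X ->
  all prime (map fst S) -> uniq (map fst S) ->
  all (fun s => match s.2 with
                | LUnr C => C \in classes [set: SymG d]
                | LRam _ => true end) S ->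
  Rabs (INR (size (filter (sat_all ram frob S) (L X))) - setweight c S * A * X)
  <= C2 * Rpower (INR (\prod_(s <- S) s.1)%nat) gamma * Rpower X delta.
Variables (p : nat) (X : R).
Hypotheses (p_prime : prime p) (X_large : X > Rpower (INR p) ((1 + gamma) / (1 - delta))).

Let D := IZR (Z.of_nat d ^ Z.of_nat r).
Let k := INR #|classes [set: SymG d]|.

Definition moment_const : R :=
  (2 * (D * (2 * k * Rabs C2 + 2 * Rabs C1 + A * Rabs Cf)) + 4 * D * Rabs C1) / A.

Let P_gt1 : 1 < INR p.
Proof. by apply: (lt_INR 1); apply/ltP; exact: prime_gt1. Qed.

Let X_facts := Rpower_threshold P_gt1 hgamma hdelta X_large.

Let X_gt1 : 1 < X.
Proof. by case: X_facts. Qed.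

Lemma fields_count_approx :
  Rabs (INR (size (L X)) - A * X) <= Rabs C1 * (X / INR p).
Proof.
apply: Rle_trans (H1 (Rlt_le _ _ X_gt1)) _.
by case: X_facts => _ _; apply: Rmult_le_Rabs_compat (Rlt_le _ _ (exp_pos _)).
Qed.

Lemma frob_class_count_approx C : C \in classes [set: SymG d] ->
  Rabs (frob_class_count (fun K => ram K p == None) (fun K => frob K p) (L X) C
        - INR #|C| / (INR #|SymG d| * (1 + fsum c p)) * A * X)
  <= Rabs C2 * (X / INR p).
Proof.
move=> C_class; rewrite frob_class_count_sat.
have := @H2 X [:: (p, LUnr w C)] (Rlt_le _ _ X_gt1); rewrite /= p_prime C_class.
rewrite /setweight !big_seq1 /= (Rmult_assoc C2) => /(_ isT isT isT) /Rle_trans; apply.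
case: X_facts => _ scale _; apply: Rmult_le_Rabs_compat scale.
by apply/Rlt_le/Rmult_lt_0_compat; apply: exp_pos.
Qed.

Lemma moment_deviation :
  Rabs (Rsum (map (fun K => IZR (a K p ^ Z.of_nat r)) (L X)) / INR (size (L X))
        - n_mult d r / (1 + fsum c p))
  <= moment_const / INR p.
Proof.
have f_ge0 : 0 <= fsum c p by apply: fsum_ge0 => i; apply: c_pos.
have f_le : fsum c p <= Rabs Cf / INR p.
  apply: Rle_trans (f_bound p_prime) (Rmult_le_Rabs_compat _ _ (Rle_refl _)).
  by apply/Rlt_le/Rinv_0_lt_compat; lra.
have AX_ge0 : 0 <= A * X by apply: Rmult_le_pos; lra.
set phi := fun g : SymG d => IZR (chi_std g ^ Z.of_nat r).
have phiJ x y : phi (x ^ y)%g = phi x by rewrite /phi chi_stdJ.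
have phi_bound g : Rabs (phi g) <= D by apply: Rabs_IZR_pow_le (ltnW hd) (chi_std_bound g).
have a_bound' K : Rabs (IZR (a K p ^ Z.of_nat r)) <= D.
  exact: Rabs_IZR_pow_le (ltnW hd) (a_bound K p).
have a_unram' K : ram K p == None -> IZR (a K p ^ Z.of_nat r) = phi (frob K p).
  by move/eqP=> unram_K; rewrite a_unram.
have := frob_average_deviation f_ge0 AX_ge0 frob_class_count_approx
  phiJ phi_bound a_bound' a_unram'.
change (n_mult d r) with (\big[Rplus/0]_(g : SymG d) phi g / INR #|SymG d|).
rewrite -Rsum_map /moment_const => deviation.
apply: (ratio_deviation hA _ _ fields_count_approx); try lra.
- apply: Rle_trans deviation _; rewrite (Rmult_assoc D); apply: Rmult_le_compat_l.
    exact: Rle_trans (Rabs_pos _) (phi_bound 1%g).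
  have := Rmult_le_compat_l _ _ _ AX_ge0 f_le.
  by rewrite -/k /Rdiv; have := fields_count_approx; lra.
- by rewrite Rsum_map Rmult_comm; apply: Rabs_sum_le_const.
- exact: Rabs_class_average_le.
Qed.

End ArtinCoefficientMoments.

Close Scope R_scope.


Theorem mainTheorem7
  (d : nat) (hd : (2 <= d)%N) (r : nat) (hr : (0 < r)%N)
  (delta gamma A C1 C2 Cf : R)
  (hdelta : (0 < delta < 1)%R) (hgamma : (0 < gamma)%R) (hA : (0 < A)%R) :
  exists Cst : R,
  forall (w : nat) (c : 'I_w -> nat -> R)
         (F : eqType) (disc : F -> nat) (L : R -> seq F)
         (ram : F -> nat -> option 'I_w) (frob : F -> nat -> SymG d)
         (a : F -> nat -> Z),
    (* local weights: c_i(p) > 0, f(p) = sum_i c_i(p) = O(1/p) *)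
    (0 < w)%N ->
    (forall i p, prime p -> (0 < c i p)%R) ->
    (forall p, prime p -> (fsum c p <= Cf / INR p)%R) ->
    (* L X enumerates (without repetition) the fields with |d_K| < X *)
    (forall X, uniq (L X) /\ forall K, K \in L X <-> (INR (disc K) < X)%R) ->
    (* a_rho(p): -1 <= a_rho(p) <= d, and a_rho(p) = chi_rho(Frob_p) if p unramified *)
    (forall K p, (-1 <= a K p <= Z.of_nat d)%Z) ->
    (forall K p, prime p -> ram K p = None -> a K p = chi_std (frob K p)) ->
    (* (H1) *)
    (forall X, (1 <= X)%R ->
       (Rabs (INR (size (L X)) - A * X) <= C1 * Rpower X delta)%R) ->
    (* (H2), uniformly in the primes and local conditions *)
    (forall X (S : seq (nat * lcond d w)), (1 <= X)%R ->
       all prime (map fst S) -> uniq (map fst S) ->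
       all (fun s => match s.2 with
                     | LUnr C => C \in classes [set: SymG d]
                     | LRam _ => true end) S ->
       (Rabs (INR (size (filter (sat_all ram frob S) (L X)))
              - setweight c S * A * X)
        <= C2 * Rpower (INR (\prod_(s <- S) s.1)%N) gamma * Rpower X delta)%R) ->
    forall (p : nat) (X : R), prime p ->
      (X > Rpower (INR p) ((1 + gamma) / (1 - delta)))%R ->
      (Rabs (Rsum (map (fun K => IZR (a K p ^ Z.of_nat r)%Z) (L X))
               / INR (size (L X))
             - n_mult d r / (1 + fsum c p))
       <= Cst / INR p)%R.
Proof.
exists (moment_const d r A C1 C2 Cf).
move=> w c F disc L ram frob a _ c_pos f_bound _ a_bound a_unram H1 H2 p X p_prime X_large.
exact: (moment_deviation r hd hdelta hgamma hA c_pos f_bound a_bound a_unram H1 H2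
  p_prime X_large).
Qed.
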